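(* Let $G$ be a connected graph. For any $s,t,p,q\in V(G)$, $$t(G)\,t(G_{pq,st})=t(G_{st})\,t(G_{pq})-\frac14\big[t(G_{ps})-t(G_{qs})-t(G_{pt})+t(G_{qt})\big]^2.$$ In particular, for any $s,p,q\in V(G)$, $$t(G)\,t(G_{pqs})=t(G_{ps})\,t(G_{pq})-\frac14\big[t(G_{ps})-t(G_{qs})+t(G_{pq})\big]^2.$$
   Context: Graphs are finite and may have multiple edges and loops; $t(H)$ is the number of spanning trees of $H$; a graph with one vertex has $t=1$. For vertices $x,y$ of a graph $H$, $H_{xy}$ is obtained by identifying $x$ and $y$, with the convention $t(H_{xx}):=0$. $G_{pq,st}$ is the graph obtained from $G_{pq}$ by identifying $s$ and $t$ (so $G_{pq,st}=(G_{pq})_{st}$), and $G_{pqs}$ is obtained from $G$ by identifying $p$, $q$ and $s$ into one vertex (i.e. $G_{pqs}=G_{pq,ps}$). *)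

From mathcomp Require Import all_boot all_order all_algebra.
Set Implicit Arguments. Unset Strict Implicit. Unset Printing Implicit Defensive.

(* A finite multigraph (loops and parallel edges allowed) is given by an
   ambient finite type V, a vertex set A : {set V}, a finite edge type E and
   an endpoint map g : E -> V * V (orientation irrelevant). *)

Section Graphs.
Variables (V E : finType).

Definition adj (g : E -> V * V) (F : {set E}) : rel V :=
  [rel x y | [exists e in F, (g e == (x, y)) || (g e == (y, x))]].

Definition wf_graph (A : {set V}) (g : E -> V * V) : Prop :=
  forall e, (g e).1 \in A /\ (g e).2 \in A.

Definition connected_graph (A : {set V}) (g : E -> V * V) : Prop :=
  forall x y, x \in A -> y \in A -> connect (adj g setT) x y.

Definition spanning_connected (A : {set V}) (g : E -> V * V) (F : {set E}) : bool :=
  [forall x in A, forall y in A, connect (adj g F) x y].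

(* F is acyclic: no edge of F lies on a cycle of F, i.e. the endpoints of
   each e in F are not connected in F \ {e} (a loop is a cycle). *)
Definition acyclic (g : E -> V * V) (F : {set E}) : bool :=
  [forall e in F, ~~ connect (adj g (F :\ e)) (g e).1 (g e).2].

Definition spanning_tree (A : {set V}) (g : E -> V * V) (F : {set E}) : bool :=
  spanning_connected A g F && acyclic g F.

Definition ntrees (A : {set V}) (g : E -> V * V) : nat :=
  #|[set F : {set E} | spanning_tree A g F]|.

Definition merge (x y : V) (v : V) : V := if v == y then x else v.

Definition merge_graph (x y : V) (g : E -> V * V) : E -> V * V :=
  fun e => (merge x y (g e).1, merge x y (g e).2).

(* t(H_xy), with the convention t(H_xx) = 0 *)
Definition t_id (A : {set V}) (g : E -> V * V) (x y : V) : nat :=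
  if x == y then 0 else ntrees (A :\ y) (merge_graph x y g).

(* t(H_{pq,st}) = t((H_pq)_st), where s,t are taken as vertices of H_pq;
   with the convention t(H_xx) = 0 at each step. *)
Definition t_id2 (A : {set V}) (g : E -> V * V) (p q s t : V) : nat :=
  if p == q then 0
  else t_id (A :\ q) (merge_graph p q g) (merge p q s) (merge p q t).

End Graphs.

From Pilot Require Import Defs.
From mathcomp Require Import all_boot all_order all_algebra.
From Stdlib Require Import FunctionalExtensionality.
From mathcomp Require Import ring.
Import GRing.Theory Num.Theory.

Set Implicit Arguments. Unset Strict Implicit. Unset Printing Implicit Defensive.

(* By the matrix-tree theorem, t(G) = det M, where M is the Laplacian of G with
   the row and column of a root r deleted.  Adding an edge uv adds b b^T to M,
   where b = e_u - e_v (and e_r = 0), while the new spanning trees through uv are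
   those of G_uv; the matrix determinant lemma thus gives t(G_uv) = t(G) R(u,v),
   with R(u,v) = b^T M^-1 b the effective resistance between u and v.  Adding
   both st and pq and using the rank-2 version of the lemma gives
   t(G_{pq,st}) = t(G) (R(p,q) R(s,t) - <b_pq, M^-1 b_st>^2), and polarization
   rewrites the cross term as (R(p,t) + R(q,s) - R(p,s) - R(q,t)) / 2.  The
   second identity is the case (s,t) := (p,s), as t(G_pp) = 0 and R is
   symmetric. *)

Lemma connect_ind (T : finType) (e : rel T) (P : T -> Prop) a :
  P a -> (forall v w, P v -> e v w -> P w) -> forall b, connect e a b -> P b.
Proof.
move=> Pa Pe b /connectP [p]; elim: p a Pa => [|c p IHp] a Pa /=; first by move=> _ ->.
by case/andP=> eac pc; apply: IHp (Pe _ _ Pa eac) pc.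
Qed.

Lemma connect_homo (T T' : finType) (h : T -> T') (e : rel T) (e' : rel T') :
  (forall a b, e a b -> connect e' (h a) (h b)) ->
  forall a b, connect e a b -> connect e' (h a) (h b).
Proof. by move=> he a; apply: connect_ind => // v w Cv /he; apply: connect_trans. Qed.

Section Adjacency.
Variables (V E : finType) (g : E -> V * V).
Implicit Types (F : {set E}) (e f : E) (u v a b : V).

Definition joins e u v := (g e == (u, v)) || (g e == (v, u)).

Lemma adjP F u v : reflect (exists2 f, f \in F & joins f u v) (adj g F u v).
Proof. exact: exists_inP. Qed.

Lemma adj_sym F : symmetric (adj g F).
Proof. by move=> u v; apply/adjP/adjP => -[f fF H]; exists f; rewrite // /joins orbC. Qed.

Lemma connect_adjC F u v : connect (adj g F) u v = connect (adj g F) v u.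
Proof. exact: (sym_connect_sym (adj_sym F)). Qed.

Lemma adj_edge F f : f \in F -> adj g F (g f).1 (g f).2.
Proof. by move=> fF; apply/adjP; exists f; rewrite // /joins -surjective_pairing eqxx. Qed.

Lemma adj_joins F f u v : f \in F -> joins f u v -> adj g F u v.
Proof. by move=> fF fuv; apply/adjP; exists f. Qed.

Lemma connect_adjS F F' : F \subset F' -> subrel (connect (adj g F)) (connect (adj g F')).
Proof.
move=> sFF'; apply: connect_sub => u v /adjP [f fF fuv].
exact/connect1/(adj_joins (subsetP sFF' f fF)).
Qed.

Lemma connect_adj0 u v : connect (adj g set0) u v = (u == v).
Proof.
apply/idP/eqP => [/connectP [[|w p] /=] | ->]; [by move=> _ -> | | exact: connect0].
by case/andP => /adjP [f]; rewrite inE.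
Qed.

Lemma connect_adjD1 F f : connect (adj g (F :\ f)) (g f).1 (g f).2 ->
  connect (adj g F) =2 connect (adj g (F :\ f)).
Proof.
move=> Cf u v; apply/idP/idP; last exact: connect_adjS (subD1set F f) u v.
apply: connect_sub u v => u v /adjP [f' f'F].
have [-> | f'f] := eqVneq f' f.
  by case/orP => /eqP Gf; move: Cf; rewrite Gf //= connect_adjC.
by move=> f'uv; apply/connect1/(adj_joins _ f'uv); rewrite !inE f'f.
Qed.

Lemma connect_adjD1_or F f a b : connect (adj g F) a b ->
  [|| connect (adj g (F :\ f)) a b, connect (adj g (F :\ f)) (g f).1 b
    | connect (adj g (F :\ f)) (g f).2 b].
Proof.
pose R' := connect (adj g (F :\ f)).
apply: (connect_ind (P := fun w => [|| R' a w, R' (g f).1 w | R' (g f).2 w])).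
  by rewrite /R' connect0.
move=> v w Cv /adjP [f' f'F f'vw]; rewrite /R' in Cv *.
have [Ef | f'f] := eqVneq f' f.
  by case/orP: f'vw => /eqP; rewrite Ef => -> /=; rewrite connect0 !orbT.
have /connect1 Cvw : adj g (F :\ f) v w by apply: adj_joins f'vw; rewrite !inE f'f.
by case/or3P: Cv => /connect_trans /(_ Cvw) ->; rewrite ?orbT.
Qed.

End Adjacency.

Definition ntrees_in (V E : finType) (A : {set V}) (g : E -> V * V) (D : {set E}) : nat :=
  #|[set F : {set E} | (F \subset D) && spanning_tree A g F]|.

Lemma setU1D1 (T : finType) (a c : T) (B : {set T}) :
  a != c -> (a |: B) :\ c = a |: (B :\ c).
Proof.
move=> ac; apply/setP => z; rewrite !inE.
by have [->|za] := eqVneq z a; rewrite ?ac ?(negPf za).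
Qed.

Section Merge.
Variables (V E : finType) (x y : V).
Hypothesis xy : x != y.
Implicit Types (A : {set V}) (D F : {set E}) (a b : V).
Local Notation m := (Defs.merge x y).

Lemma merge_y : m y = x. Proof. by rewrite /Defs.merge eqxx. Qed.
Lemma merge_id a : a != y -> m a = a. Proof. by rewrite /Defs.merge => /negPf ->. Qed.
Lemma merge_x : m x = x. Proof. exact: merge_id. Qed.
Lemma mergeK a : m (m a) = m a.
Proof. by have [->|ay] := eqVneq a y; rewrite ?merge_y ?merge_x ?merge_id. Qed.

Lemma merge_in A a : x \in A -> a \in A -> m a \in A :\ y.
Proof. by move=> xA aA; rewrite /Defs.merge; case: eqP => [_|/eqP ay]; rewrite !inE ?xy ?ay. Qed.

Lemma wf_merge A (g : E -> V * V) : wf_graph A g -> x \in A ->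
  wf_graph (A :\ y) (merge_graph x y g).
Proof. by move=> wf xA f; case: (wf f) => f1A f2A; rewrite !merge_in. Qed.

Variables (g : E -> V * V) (e : E).
Hypothesis exy : joins g e x y.
Local Notation mg := (merge_graph x y g).

Lemma connect_merge_eq F a b : m a = m b -> connect (adj g (e |: F)) a b.
Proof.
have Cxy : adj g (e |: F) x y by apply: adj_joins exy; rewrite setU11.
rewrite /Defs.merge; case: eqP => [->|_]; case: eqP => [->|_] //.
- by move=> <-; rewrite connect_adjC connect1.
- by move=> ->; rewrite connect1.
- by move=> ->; rewrite connect0.
Qed.

Lemma connect_merge F a b :
  connect (adj mg F) (m a) (m b) = connect (adj g (e |: F)) a b.
Proof.
apply/idP/idP => [Cab | ].
  have Cf f : f \in F -> connect (adj g (e |: F)) (m (g f).1) (m (g f).2).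
    move=> fF; apply: connect_trans (connect_merge_eq _ (mergeK _)) _.
    apply: connect_trans (connect1 (adj_edge _ (setU1r e fF))) _.
    exact: connect_merge_eq (esym (mergeK _)).
  apply: connect_trans (connect_merge_eq _ (esym (mergeK a))) _.
  apply: connect_trans (connect_merge_eq _ (mergeK b)); move: Cab.
  apply: connect_sub => u v /adjP [f fF /orP [] /eqP [<- <-]]; first exact: Cf.
  by rewrite connect_adjC; apply: Cf.
apply: connect_homo => u v /adjP [f]; rewrite in_setU1 => /orP [/eqP -> | fF] fuv.
  apply: eq_connect0; move: fuv; rewrite /joins.
  by case/orP: exy => /eqP -> /orP [] /eqP [<- <-]; rewrite ?merge_x ?merge_y.
apply/connect1/(adj_joins fF); rewrite /joins /merge_graph.
by case/orP: fuv => /eqP ->; rewrite eqxx ?orbT.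
Qed.

Lemma spanning_connected_merge A F : x \in A ->
  spanning_connected (A :\ y) mg F = spanning_connected A g (e |: F).
Proof.
move=> xA; apply/forall_inP/forall_inP => C a aA; apply/forall_inP => b bA.
  by rewrite -connect_merge; apply: (forall_inP (C _ (merge_in xA aA))); apply: merge_in.
case/setD1P: aA => ay aA; case/setD1P: bA => b_y bA.
by rewrite -(merge_id ay) -(merge_id b_y) connect_merge; apply: (forall_inP (C _ aA)).
Qed.

(* Take F' in F minimal such that x and y are connected in F', and f in F'.
   By minimality f separates x from y in F', so one endpoint of f reaches x and
   the other reaches y without f, and e closes a cycle through f. *)
Lemma exists_cycle_edge F : connect (adj g F) x y ->
  exists2 f, f \in F & connect (adj g (e |: (F :\ f))) (g f).1 (g f).2.
Proof.
move=> Cxy; pose P := [pred F' : {set E} | (F' \subset F) && connect (adj g F') x y].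
have PF : P F by rewrite /= subxx.
case: (arg_minnP (fun F' => #|F'|) PF) => F' /andP [sF'F CF'] minF'.
have [F'0 | [f fF']] := set_0Vmem F'.
  by move: CF'; rewrite F'0 connect_adj0 (negPf xy).
exists f; first exact: subsetP sF'F f fF'.
pose R' := connect (adj g (F' :\ f)).
have nCxy : ~~ R' x y.
  apply/negP => C; have /minF' : P (F' :\ f) by rewrite /= (subset_trans (subD1set _ _)).
  by rewrite (cardsD1 f F') fF' ltnn.
have sR' : subrel R' (connect (adj g (e |: (F :\ f)))).
  exact/connect_adjS/(subset_trans (setSD _ sF'F))/subsetUr.
have Cxy' : connect (adj g (e |: (F :\ f))) x y.
  exact/connect1/(adj_joins (setU11 _ _) exy).
have end_y : R' (g f).1 y || R' (g f).2 y.
  by move: (connect_adjD1_or f CF'); rewrite -/R' (negPf nCxy).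
have end_x : R' (g f).1 x || R' (g f).2 x.
  have CyxF' : connect (adj g F') y x by rewrite connect_adjC.
  have nCyx : ~~ R' y x by rewrite /R' connect_adjC.
  by move: (connect_adjD1_or f CyxF'); rewrite -/R' (negPf nCyx).
case/orP: end_y => [C1y | C2y]; case/orP: end_x => [C1x | C2x].
- by case/negP: nCxy; rewrite /R' connect_adjC in C1x; apply: connect_trans C1x C1y.
- apply: connect_trans (sR' _ _ C1y) _; rewrite connect_adjC in Cxy'.
  by apply: connect_trans Cxy' _; rewrite connect_adjC; apply: sR'.
- apply: connect_trans (sR' _ _ C1x) (connect_trans Cxy' _).
  by rewrite connect_adjC; apply: sR'.
- by case/negP: nCxy; rewrite /R' connect_adjC in C2x; apply: connect_trans C2x C2y.
Qed.

Lemma acyclic_merge F : e \notin F -> acyclic g (e |: F) = acyclic mg F.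
Proof.
move=> eF.
have Cf f : f \in F -> connect (adj g ((e |: F) :\ f)) (g f).1 (g f).2
                       = connect (adj mg (F :\ f)) (mg f).1 (mg f).2.
  move=> fF; have ef : e != f by apply: contraNneq eF => ->.
  by rewrite setU1D1 // -connect_merge.
apply/forall_inP/forall_inP => [acyc f fF | acyc f].
  by rewrite -Cf //; apply: acyc; rewrite setU1r.
rewrite in_setU1 => /orP [/eqP -> | fF]; last by rewrite Cf //; apply: acyc.
have nCxy : ~~ connect (adj g F) x y.
  apply/negP => /exists_cycle_edge [f' f'F].
  by rewrite -setU1D1 ?Cf ?(negPf (acyc f' f'F)) //; apply: contraNneq eF => ->.
rewrite setU1K //; move: exy; rewrite /joins.
by case/orP => /eqP -> //=; rewrite connect_adjC.
Qed.

Lemma spanning_tree_merge A F : x \in A -> e \notin F ->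
  spanning_tree A g (e |: F) = spanning_tree (A :\ y) mg F.
Proof. by move=> xA eF; rewrite /spanning_tree spanning_connected_merge ?acyclic_merge. Qed.

Lemma ntrees_in_contract A D : e \in D -> x \in A ->
  ntrees_in A g D = ntrees_in A g (D :\ e) + ntrees_in (A :\ y) mg (D :\ e).
Proof.
move=> eD xA; rewrite /ntrees_in.
set S := [set F : {set E} | _].
rewrite -(cardsID [set F : {set E} | e \in F] S) addnC; congr (_ + _).
  apply: eq_card => F; rewrite !inE subsetD1.
  by case: (F \subset D) (e \in F) (spanning_tree A g F) => [] [] [].
have -> : S :&: [set F : {set E} | e \in F] = (fun F => e |: F) @:
    [set F : {set E} | (F \subset D :\ e) && spanning_tree (A :\ y) mg F].
  apply/setP => F; rewrite !inE; apply/andP/imsetP => [[/andP [sFD tF] eF] | [F' + ->]].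
    exists (F :\ e); last by rewrite setD1K.
    by rewrite inE (setSD _ sFD) -spanning_tree_merge ?setD11 ?setD1K.
  rewrite inE subsetD1 => /andP [/andP [sF'D eF'] tF'].
  rewrite setU11 spanning_tree_merge // tF' andbT subUset sub1set eD.
  by rewrite (subset_trans sF'D) ?subD1set.
rewrite card_in_imset // => F1 F2; rewrite !inE !subsetD1.
by move=> /andP [/andP [_ e1] _] /andP [/andP [_ e2] _] E12; rewrite -(setU1K e1) E12 setU1K.
Qed.

End Merge.

Section TreeCount.
Variables (V E : finType).
Implicit Types (A : {set V}) (g : E -> V * V) (D F : {set E}).

Lemma ntreesE A g : ntrees A g = ntrees_in A g setT.
Proof. by apply: eq_card => F; rewrite !inE subsetT. Qed.

Lemma ntrees_in_loop A g D e : (g e).1 = (g e).2 ->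
  ntrees_in A g D = ntrees_in A g (D :\ e).
Proof.
move=> loop_e; apply: eq_card => F; rewrite !inE subsetD1.
case eF: (e \in F); rewrite ?andbT //= andbF /spanning_tree.
suff /negPf -> : ~~ acyclic g F by rewrite !andbF.
by apply/forall_inP => /(_ e eF); rewrite loop_e connect0.
Qed.

Lemma ntrees_gt0 A g : connected_graph A g -> 0 < ntrees A g.
Proof.
move=> conn; have sc : spanning_connected A g setT.
  by apply/forall_inP => a aA; apply/forall_inP => b bA; apply: conn.
case: (arg_minnP (fun F : {set E} => #|F|) sc) => F scF minF.
apply/card_gt0P; exists F; rewrite inE /spanning_tree scF /=.
apply/forall_inP => f fF; apply/negP => Cf; have /minF : spanning_connected A g (F :\ f).
  apply/forall_inP => a aA; apply/forall_inP => b bA.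
  by rewrite -connect_adjD1 ?(forall_inP (forall_inP scF a aA)).
by rewrite (cardsD1 f F) fF ltnn.
Qed.

Lemma ntrees_in_isolated A g D r : wf_graph A g -> r \in A ->
  (forall e, e \in D -> ((g e).1 != r) && ((g e).2 != r)) ->
  ntrees_in A g D = (A :\ r == set0).
Proof.
move=> wf rA isol.
have stuck F : F \subset D -> forall w, connect (adj g F) r w -> w = r.
  move=> sFD; apply: connect_ind => // v w -> /adjP [f fF rw].
  by have := isol f (subsetP sFD f fF); case/orP: rw => /eqP -> /=; rewrite eqxx ?andbF.
have [Ar0 | [v]] := set_0Vmem (A :\ r); last first.
  rewrite !inE => /andP [vr vA]; rewrite (_ : A :\ r == set0 = false); last first.
    by apply/negbTE/set0Pn; exists v; rewrite !inE vr.
  apply/eqP; rewrite cards_eq0; apply/eqP/setP => F; rewrite !inE.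
  apply/negP => /and3P [sFD /forall_inP /(_ r rA) /forall_inP /(_ v vA) /(stuck F sFD) vr' _].
  by rewrite vr' eqxx in vr.
have onlyr a : a \in A -> a = r.
  move=> aA; apply/eqP/negPn/negP => ar.
  have : a \in A :\ r by rewrite !inE ar.
  by rewrite Ar0 inE.
rewrite Ar0 eqxx /ntrees_in (_ : [set F | _] = [set set0]) ?cards1 //.
apply/setP => F; rewrite !inE; apply/andP/eqP => [[sFD _] | ->].
  apply/setP => f; rewrite inE; apply/negbTE/negP => fF.
  have /andP [f1r _] := isol f (subsetP sFD f fF).
  by case: (wf f) => /onlyr f1 _; rewrite f1 eqxx in f1r.
split; first exact: sub0set.
apply/andP; split; last by apply/forall_inP => f; rewrite inE.
by apply/forall_inP => a /onlyr ->; apply/forall_inP => b /onlyr ->; rewrite connect0.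
Qed.

Lemma ntrees_in_relabel (E' : finType) (h : E -> E') (g' : E' -> V * V) A D :
  injective h -> ntrees_in A g' (h @: D) = ntrees_in A (g' \o h) D.
Proof.
move=> inj_h.
have adj_h F : adj g' (h @: F) = adj (g' \o h) F.
  do 2!apply: functional_extensionality => ?.
  apply/adjP/adjP => [[_ /imsetP [f fF ->]] | [f fF]]; first by exists f.
  by exists (h f); rewrite ?imset_f.
have hD1 F f : (h @: F) :\ h f = h @: (F :\ f).
  apply/setP => z; rewrite !inE.
  apply/andP/imsetP => [[zf /imsetP [f' f'F Ez]] | [f' + ->]].
    by rewrite Ez (inj_eq inj_h) in zf; exists f'; rewrite // !inE zf.
  by rewrite !inE (inj_eq inj_h) => /andP [-> /(imset_f h)].
have tree_h F : spanning_tree A g' (h @: F) = spanning_tree A (g' \o h) F.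
  rewrite /spanning_tree /spanning_connected adj_h; congr andb.
  apply/forall_inP/forall_inP => acyc f => [fF | /imsetP [f' f'F ->]].
    by move: (acyc _ (imset_f h fF)); rewrite hD1 adj_h.
  by rewrite hD1 adj_h; apply: acyc.
rewrite /ntrees_in -(card_imset _ (imset_inj inj_h)); apply: eq_card => F'.
rewrite inE; apply/andP/imsetP => [[sF'D tF'] | [F]]; last first.
  by rewrite inE => /andP [sFD tF] ->; rewrite imsetS ?tree_h.
have F'E : F' = h @: (h @^-1: F').
  apply/setP => z; apply/idP/imsetP => [zF' | [f + ->]]; last by rewrite inE.
  by have /imsetP [f _ Ez] := subsetP sF'D z zF'; exists f; rewrite // inE -Ez.
exists (h @^-1: F') => //; rewrite inE -tree_h -F'E tF' andbT.
by apply/subsetP => f; rewrite inE -(mem_imset _ _ inj_h) => /(subsetP sF'D).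
Qed.

End TreeCount.

Section AddEdge.
Variables (V E : finType).
Implicit Types (A : {set V}) (g : E -> V * V).

Lemma setTD1_None : [set: option E] :\ None = Some @: [set: E].
Proof. by apply/setP => -[e|]; rewrite !inE ?imset_f //; apply/esym/imsetP => -[]. Qed.

Definition add_edge g (uv : V * V) : option E -> V * V :=
  fun o => if o is Some e then g e else uv.

Lemma wf_add_edge A g u v : wf_graph A g -> u \in A -> v \in A ->
  wf_graph A (add_edge g (u, v)).
Proof. by move=> wf uA vA [e|] //=; apply: wf. Qed.

Lemma ntrees_add_edge A g u v : u \in A ->
  ntrees A (add_edge g (u, v)) = ntrees A g + t_id A g u v.
Proof.
move=> uA.
rewrite !ntreesE /t_id; have [<- | uv] := eqVneq u v.
  rewrite (ntrees_in_loop _ _ (e := None)) // setTD1_None.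
  by rewrite (ntrees_in_relabel _ _ _ Some_inj) addn0.
have new : joins (add_edge g (u, v)) None u v by rewrite /joins eqxx.
rewrite (ntrees_in_contract uv new) ?inE // setTD1_None.
by rewrite !(ntrees_in_relabel _ _ _ Some_inj) ntreesE.
Qed.

Lemma t_id_xx A g u : t_id A g u u = 0.
Proof. by rewrite /t_id eqxx. Qed.

Lemma t_id_add_edge A g p q s t : p \in A -> s \in A ->
  t_id A (add_edge g (s, t)) p q = t_id A g p q + t_id2 A g p q s t.
Proof.
move=> pA sA; rewrite /t_id2 /t_id; have [// | pq] := eqVneq p q.
have -> : merge_graph p q (add_edge g (s, t))
        = add_edge (merge_graph p q g) (Defs.merge p q s, Defs.merge p q t).
  by apply: functional_extensionality => -[e|].
by rewrite ntrees_add_edge ?merge_in.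
Qed.

End AddEdge.

Local Open Scope ring_scope.

Section DetLemmas.
Variable R : comPzRingType.

Lemma cofactor_eq n (P Q : 'M[R]_n) i j :
  (forall a b, a != i -> b != j -> Q a b = P a b) -> cofactor Q i j = cofactor P i j.
Proof.
move=> QP; rewrite /cofactor; congr (_ * \det _); apply/matrixP => a b.
by rewrite !mxE QP // eq_sym neq_lift.
Qed.

Lemma det_add_delta n (P : 'M[R]_n) i :
  \det (P + delta_mx i i) = \det P + cofactor P i i.
Proof.
rewrite !(expand_det_row _ i).
have -> : \sum_j (P + delta_mx i i) i j * cofactor (P + delta_mx i i) i j
        = \sum_j (P i j * cofactor P i j + (j == i)%:R * cofactor P i j).
  apply: eq_bigr => j _; rewrite (cofactor_eq (P := P)) => [|a b ai _].
    by rewrite !mxE eqxx mulrDl.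
  by rewrite !mxE (negPf ai) addr0.
rewrite big_split /=; congr (_ + _).
rewrite (bigD1 i) //= eqxx mul1r big1 ?addr0 // => j /negPf ->.
by rewrite mul0r.
Qed.

Lemma det_1D_mulmxC n k (U : 'M[R]_(n, k)) (W : 'M[R]_(k, n)) :
  \det (1%:M + U *m W) = \det (1%:M + W *m U).
Proof.
pose X := block_mx 1%:M U (- W) 1%:M.
pose B := block_mx 1%:M 0 W (1%:M : 'M_k).
have XB : X *m B = block_mx (1%:M + U *m W) U 0 1%:M.
  by rewrite mulmx_block !mulmx0 !mulmx1 !mul1mx !add0r addNr.
have BX : B *m X = block_mx 1%:M U 0 (1%:M + W *m U).
  by rewrite mulmx_block !mul1mx !mul0mx !addr0 mulmx1 addrN addrC.
have : \det (X *m B) = \det (B *m X) by rewrite !det_mulmx mulrC.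
by rewrite XB BX !det_ublock !det1 mulr1 mul1r.
Qed.

Lemma det_mx2 (N : 'M[R]_2) :
  \det N = N 0 0 * N (lift 0 0) (lift 0 0) - N 0 (lift 0 0) * N (lift 0 0) 0.
Proof.
rewrite (expand_det_row _ 0) !big_ord_recl big_ord0 /cofactor !det_mx11 !mxE /=.
rewrite expr0 expr1 !mul1r addr0 mulN1r mulrN.
have -> : lift 0 (0 : 'I_1) = lift 0 0 :> 'I_2 by apply: val_inj.
by have -> : lift (lift 0 0) (0 : 'I_1) = 0 :> 'I_2 by apply: val_inj.
Qed.

Lemma det1D_mx11 (X : 'M[R]_1) : \det (1%:M + X) = 1 + X 0 0.
Proof. by rewrite det_mx11 !mxE. Qed.

Lemma trmx_mul_mxE n k (Z : 'M[R]_(n, k)) (N : 'M[R]_n) i j :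
  (Z^T *m N *m Z) i j = ((col i Z)^T *m N *m col j Z) 0 0.
Proof.
rewrite !mxE; apply: eq_bigr => l _; rewrite !mxE; congr (_ * _).
by apply: eq_bigr => m _; rewrite !mxE.
Qed.

Definition col_pair n (z1 z2 : 'cV[R]_n) : 'M[R]_(n, 2) :=
  \matrix_(k, i) if i == 0 then z1 k 0 else z2 k 0.

Lemma col_pair_mul_tr n (z1 z2 : 'cV[R]_n) :
  col_pair z1 z2 *m (col_pair z1 z2)^T = z1 *m z1^T + z2 *m z2^T.
Proof. by apply/matrixP => a b; rewrite !mxE !big_ord_recl !big_ord0 !mxE /= !addr0. Qed.

Lemma col_pair0 n (z1 z2 : 'cV[R]_n) : col 0 (col_pair z1 z2) = z1.
Proof. by apply/matrixP => a b; rewrite !mxE eqxx (ord1 b). Qed.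

Lemma col_pair1 n (z1 z2 : 'cV[R]_n) : col (lift 0 0) (col_pair z1 z2) = z2.
Proof. by apply/matrixP => a b; rewrite !mxE /= (ord1 b). Qed.

End DetLemmas.

Lemma det_lowrank_update (R : comUnitRingType) n k (M : 'M[R]_n) (Z : 'M[R]_(n, k)) :
  M \in unitmx -> \det (M + Z *m Z^T) = \det M * \det (1%:M + Z^T *m invmx M *m Z).
Proof.
move=> Mu; have -> : M + Z *m Z^T = M *m (1%:M + invmx M *m Z *m Z^T).
  by rewrite mulmxDr mulmx1 !mulmxA mulmxV // mul1mx.
by rewrite det_mulmx det_1D_mulmxC mulmxA.
Qed.

Section Laplacian.
Variables (R : idomainType) (V E : finType).
Implicit Types (g : E -> V * V) (A S : {set V}) (D : {set E}) (L : V -> V -> R).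

Definition edge_vec (u v : V) (a : V) : R := (a == u)%:R - (a == v)%:R.

Definition laplacian g D (a b : V) : R :=
  \sum_(e in D) edge_vec (g e).1 (g e).2 a * edge_vec (g e).1 (g e).2 b.

(* The principal submatrix of L on S, padded with the identity outside S so
   that it keeps the index type 'I_#|V| and the same determinant. *)
Definition pad_mx S L : 'M[R]_#|V| :=
  \matrix_(i, j) if (enum_val i \in S) && (enum_val j \in S)
                 then L (enum_val i) (enum_val j) else (i == j)%:R.

Definition col_on S (c : V -> R) : 'cV[R]_#|V| :=
  \col_i (if enum_val i \in S then c (enum_val i) else 0).

Definition basis_col S u := col_on S (fun a => (a == u)%:R).

Lemma eq_enum_rank (i : 'I_#|V|) u : (i == enum_rank u) = (enum_val i == u).
Proof. by rewrite (can2_eq enum_valK enum_rankK). Qed.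

Lemma eq_pad_mx S L L' : {in S &, L =2 L'} -> pad_mx S L = pad_mx S L'.
Proof.
by move=> LL'; apply/matrixP => i j; rewrite !mxE; case: ifP => // /andP [iS jS]; rewrite LL'.
Qed.

Lemma tr_pad_mx S L : (forall a b, L a b = L b a) -> (pad_mx S L)^T = pad_mx S L.
Proof. by move=> Lsym; apply/matrixP => i j; rewrite !mxE andbC eq_sym Lsym. Qed.

Lemma pad_mx_add_sqr S L (c : V -> R) :
  pad_mx S (fun a b => L a b + c a * c b) = pad_mx S L + col_on S c *m (col_on S c)^T.
Proof.
apply/matrixP => i j; rewrite !mxE big_ord1 !mxE.
by case: (enum_val i \in S); case: (enum_val j \in S); rewrite ?mulr0 ?mul0r ?addr0.
Qed.

Lemma col_on_edge_vec S u v : col_on S (edge_vec u v) = basis_col S u - basis_col S v.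
Proof. by apply/matrixP => i j; rewrite !mxE; case: ifP; rewrite ?subr0. Qed.

Lemma basis_colE S u i j : u \in S -> basis_col S u i j = (enum_val i == u)%:R.
Proof. by move=> uS; rewrite mxE; case: ifP => // iS; case: eqP => // Ei; rewrite -Ei iS in uS. Qed.

Lemma basis_col_notin S u : u \notin S -> basis_col S u = 0.
Proof.
move=> uS; apply/matrixP => i j; rewrite !mxE /=.
by case: ifP => // iS; case: eqP => // Ei; rewrite -Ei iS in uS.
Qed.

Lemma basis_col_sqr S u : u \in S ->
  basis_col S u *m (basis_col S u)^T = delta_mx (enum_rank u) (enum_rank u).
Proof.
move=> uS; apply/matrixP => i j; rewrite [LHS]mxE big_ord1 [X in _ * X]mxE !basis_colE //.
by rewrite mxE !eq_enum_rank -natrM mulnb.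
Qed.

Lemma laplacian_setD1 g D e a b : e \in D ->
  laplacian g D a b
  = laplacian g (D :\ e) a b + edge_vec (g e).1 (g e).2 a * edge_vec (g e).1 (g e).2 b.
Proof. by move=> eD; rewrite /laplacian (big_setD1 e eD) addrC. Qed.

Lemma laplacian_sym g D a b : laplacian g D a b = laplacian g D b a.
Proof. by apply: eq_bigr => e _; rewrite mulrC. Qed.

Lemma sum_edge_vec S u v : \sum_(a in S) edge_vec u v a = (u \in S)%:R - (v \in S)%:R.
Proof.
have sum1 w : \sum_(a in S) ((a == w)%:R : R) = (w \in S)%:R.
  have [wS | wS] := boolP (w \in S).
    by rewrite (bigD1 w) //= eqxx big1 ?addr0 // => a /andP [_ /negPf ->].
  by rewrite big1 // => a aS; case: eqP => // Ea; rewrite -Ea aS in wS.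
by rewrite sumrB !sum1.
Qed.

Lemma sum_pad_col S (c : V -> R) :
  \sum_(i < #|V|) (if enum_val i \in S then c (enum_val i) else 0) = \sum_(a in S) c a.
Proof. by rewrite -(big_enum_val (fun a => if a \in S then c a else 0)) -big_mkcond. Qed.

Lemma laplacian_loop g D e a b : e \in D -> (g e).1 = (g e).2 ->
  laplacian g D a b = laplacian g (D :\ e) a b.
Proof.
by move=> eD loop_e; rewrite (laplacian_setD1 g a b eD) loop_e /edge_vec subrr mul0r addr0.
Qed.

Lemma laplacian_merge g D x y a b : a \notin [:: x; y] -> b \notin [:: x; y] ->
  laplacian (merge_graph x y g) D a b = laplacian g D a b.
Proof.
have merge_vec u v c : c \notin [:: x; y] ->
    edge_vec (Defs.merge x y u) (Defs.merge x y v) c = edge_vec u v c.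
  rewrite !inE negb_or => /andP [cx cy]; rewrite /edge_vec /Defs.merge.
  by case: (u =P y) => [->|_]; case: (v =P y) => [->|_]; rewrite ?(negPf cx) ?(negPf cy).
by move=> aS bS; apply: eq_bigr => e _; rewrite !merge_vec.
Qed.

Lemma pad_laplacian_merge A g D r y :
  pad_mx ((A :\ y) :\ r) (laplacian (merge_graph r y g) D)
  = pad_mx ((A :\ r) :\ y) (laplacian g D).
Proof.
have -> : (A :\ y) :\ r = (A :\ r) :\ y by rewrite !setDDl setUC.
by apply: eq_pad_mx => a b; rewrite !inE => /and3P [ay ar _] /and3P [b_y br _];
  rewrite laplacian_merge // !inE negb_or ?ar ?ay ?br ?b_y.
Qed.

Lemma pad_laplacian_pendant A g D e r y : e \in D -> joins g e r y -> y \in A :\ r ->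
  pad_mx (A :\ r) (laplacian g D)
  = pad_mx (A :\ r) (laplacian g (D :\ e)) + delta_mx (enum_rank y) (enum_rank y).
Proof.
move=> eD ery yS; rewrite (eq_pad_mx (L' := fun a b => laplacian g (D :\ e) a b
  + edge_vec (g e).1 (g e).2 a * edge_vec (g e).1 (g e).2 b)); last first.
  by move=> a b _ _; apply: laplacian_setD1.
rewrite pad_mx_add_sqr col_on_edge_vec -(basis_col_sqr yS).
have r0 : basis_col (A :\ r) r = 0 by apply: basis_col_notin; rewrite setD11.
by case/orP: ery => /eqP -> /=; rewrite r0 ?subr0 // sub0r linearN /= mulNmx mulmxN opprK.
Qed.

Lemma det_pad_mxD1 S L y : y \in S ->
  \det (pad_mx (S :\ y) L) = cofactor (pad_mx S L) (enum_rank y) (enum_rank y).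
Proof.
move=> yS; rewrite (expand_det_row _ (enum_rank y)) (bigD1 (enum_rank y)) //= big1.
  rewrite !mxE enum_rankK setD11 eqxx mul1r addr0; apply: cofactor_eq => i j.
  by rewrite !mxE !eq_enum_rank !inE => /negPf -> /negPf ->.
by move=> j jy; rewrite !mxE enum_rankK setD11 eq_sym (negPf jy) mul0r.
Qed.

Lemma det_pad_laplacian_isolated A g D r : wf_graph A g ->
  (forall e, e \in D -> ((g e).1 != r) && ((g e).2 != r)) ->
  \det (pad_mx (A :\ r) (laplacian g D)) = (A :\ r == set0)%:R.
Proof.
move=> wf isol; set S := A :\ r.
have [S0 | [v vS]] := set_0Vmem S.
  by rewrite S0 eqxx -(det1 _ #|V|); congr (\det _); apply/matrixP => i j; rewrite !mxE in_set0.
rewrite (_ : S == set0 = false); last by apply/negbTE/set0Pn; exists v.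
apply/eqP/det0P; exists (col_on S (fun=> 1))^T.
  apply/negP => /eqP /matrixP /(_ 0 (enum_rank v)); rewrite !mxE enum_rankK vS.
  by move/eqP; rewrite oner_eq0.
have endS e : e \in D -> ((g e).1 \in S) && ((g e).2 \in S).
  by move=> eD; case: (wf e) (isol e eD) => e1A e2A /andP [e1r e2r]; rewrite !inE e1r e2r e1A e2A.
apply/rowP => j; rewrite !mxE; under eq_bigr => i _ do rewrite !mxE.
case jS: (enum_val j \in S); last first.
  apply: big1 => i _; case: ifP => iS; rewrite ?mul0r // andbF mul1r.
  by case: eqP => // Eij; rewrite Eij jS in iS.
pose c a := laplacian g D a (enum_val j).
rewrite (eq_bigr (fun i => if enum_val i \in S then c (enum_val i) else 0)); last first.
  by move=> i _; case: ifP; rewrite ?mul1r ?mul0r ?andbT.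
rewrite sum_pad_col /c exchange_big big1 // => e eD; rewrite -big_distrl /= sum_edge_vec.
by case/andP: (endS e eD) => -> ->; rewrite subrr mul0r.
Qed.

Theorem matrix_tree A g D r : wf_graph A g -> r \in A ->
  (ntrees_in A g D)%:R = \det (pad_mx (A :\ r) (laplacian g D)).
Proof.
have [k ltDk] := ubnP #|D|; elim: k => // k IH in A g D r ltDk *; move=> wf rA.
case: (pickP [pred e in D | ((g e).1 == r) || ((g e).2 == r)]) => [e /andP [eD er] | isol];
  last first.
  have away e : e \in D -> ((g e).1 != r) && ((g e).2 != r).
    by move=> eD; have := isol e; rewrite /= eD => /negbT; rewrite negb_or.
  by rewrite (ntrees_in_isolated wf rA away) det_pad_laplacian_isolated.
have {}ltDk : (#|D :\ e| < k)%N by rewrite (cardsD1 e D) eD in ltDk.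
have [y ery] : exists y, joins g e r y.
  by case/orP: er => /eqP <-; [exists (g e).2 | exists (g e).1];
     rewrite /joins -surjective_pairing eqxx ?orbT.
have [yr | ry] := eqVneq y r.
  have loop_e : (g e).1 = (g e).2 by move: ery; rewrite yr /joins orbb => /eqP ->.
  rewrite (ntrees_in_loop _ _ loop_e) (IH _ _ _ r) //; congr (\det _).
  by apply: eq_pad_mx => a b _ _; rewrite (laplacian_loop _ _ eD loop_e).
have yA : y \in A by case: (wf e); case/orP: ery => /eqP -> /=.
have yS : y \in A :\ r by rewrite !inE ry yA.
have r'y : r != y by rewrite eq_sym.
have rAy : r \in A :\ y by rewrite !inE r'y.
have wf' := wf_merge r'y wf rA.
rewrite (ntrees_in_contract r'y ery eD rA) natrD !(IH _ _ _ r) //.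
by rewrite (pad_laplacian_pendant eD ery yS) det_add_delta pad_laplacian_merge (det_pad_mxD1 _ yS).
Qed.

End Laplacian.

Lemma pad_laplacian_add_edge (R : idomainType) (V E : finType) (S : {set V})
    (h : E -> V * V) u v :
  pad_mx S (laplacian R (add_edge h (u, v)) setT)
  = pad_mx S (laplacian R h setT)
    + (basis_col R S u - basis_col R S v) *m (basis_col R S u - basis_col R S v)^T.
Proof.
rewrite -col_on_edge_vec -pad_mx_add_sqr; apply: eq_pad_mx => a b _ _.
rewrite /laplacian (big_setD1 None) ?inE // setTD1_None big_imset /=; last by move=> ? ? _ _ [].
by rewrite addrC.
Qed.

Section Resistance.
Variables (R : numFieldType) (V E : finType) (A : {set V}) (g : E -> V * V) (r : V).
Hypotheses (wf : wf_graph A g) (conn : connected_graph A g) (rA : r \in A).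

Local Notation M := (pad_mx (A :\ r) (laplacian R g setT)).
Local Notation w := (basis_col R (A :\ r)).

(* invmx M is the Green function of the network grounded at r, and
   [resistance a b] the effective resistance between a and b. *)
Definition green (z1 z2 : 'cV[R]_#|V|) : R := (z1^T *m invmx M *m z2) 0 0.
Definition resistance (a b : V) : R := green (w a - w b) (w a - w b).

Lemma ntrees_det : (ntrees A g)%:R = \det M.
Proof. by rewrite ntreesE (matrix_tree _ _ wf rA). Qed.

Lemma laplacian_unitmx : M \in unitmx.
Proof. by rewrite unitmxE unitfE -ntrees_det pnatr_eq0 -lt0n ntrees_gt0. Qed.

Lemma green_sym z1 z2 : green z1 z2 = green z2 z1.
Proof.
have M_sym : M^T = M by apply: tr_pad_mx; apply: laplacian_sym.
have : (z1^T *m invmx M *m z2)^T = z2^T *m invmx M *m z1.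
  by rewrite !trmx_mul trmxK trmx_inv M_sym mulmxA.
by move/matrixP/(_ 0 0); rewrite mxE.
Qed.

Lemma greenBl z1 z1' z2 : green (z1 - z1') z2 = green z1 z2 - green z1' z2.
Proof. by rewrite /green linearB /= !mulmxBl !mxE. Qed.

Lemma greenBr z1 z2 z2' : green z1 (z2 - z2') = green z1 z2 - green z1 z2'.
Proof. by rewrite /green !mulmxBr !mxE. Qed.

Lemma t_id_resistance u v : u \in A -> v \in A ->
  (t_id A g u v)%:R = \det M * resistance u v.
Proof.
move=> uA vA; apply: (@addrI _ (\det M)); rewrite -ntrees_det -natrD -ntrees_add_edge //.
rewrite ntreesE (matrix_tree _ _ (wf_add_edge wf uA vA) rA) pad_laplacian_add_edge.
by rewrite (det_lowrank_update _ laplacian_unitmx) det1D_mx11 mulrDr mulr1 ntrees_det.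
Qed.

Lemma t_id2_green p q s t : p \in A -> q \in A -> s \in A -> t \in A ->
  (t_id2 A g p q s t)%:R
  = \det M * (resistance p q * resistance s t - green (w p - w q) (w s - w t) ^+ 2).
Proof.
move=> pA qA sA tA; set z1 := w p - w q; set z2 := w s - w t.
have wf_st := wf_add_edge wf sA tA.
have two_edges : (ntrees A (add_edge (add_edge g (s, t)) (p, q)))%:R
    = \det M * ((1 + green z1 z1) * (1 + green z2 z2) - green z1 z2 * green z2 z1).
  rewrite ntreesE (matrix_tree _ _ (wf_add_edge wf_st pA qA) rA) !pad_laplacian_add_edge.
  rewrite -/z1 -/z2 -addrA [_ + z1 *m _]addrC -col_pair_mul_tr.
  rewrite (det_lowrank_update _ laplacian_unitmx) det_mx2.
  have entry i j : (1%:M + (col_pair z1 z2)^T *m invmx M *m col_pair z1 z2) i j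
      = (i == j)%:R + green (col i (col_pair z1 z2)) (col j (col_pair z1 z2)).
    by rewrite mxE [1%:M _ _]mxE trmx_mul_mxE.
  by rewrite !entry col_pair0 col_pair1 /= !add0r.
move: two_edges; rewrite ntrees_add_edge // ntrees_add_edge // t_id_add_edge //.
rewrite !natrD ntrees_det !t_id_resistance // (green_sym z2 z1) -/z1 -/z2 => H.
rewrite /resistance -/z1 -/z2.
apply: (@addrI _ (\det M + \det M * green z2 z2 + \det M * green z1 z1)).
transitivity (\det M + \det M * green z2 z2 + (\det M * green z1 z1 + (t_id2 A g p q s t)%:R)).
  by ring.
by rewrite H; ring.
Qed.

Lemma resistance_sym a b : resistance a b = resistance b a.
Proof. by rewrite /resistance !greenBl !greenBr (green_sym (w b) (w a)); ring. Qed.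

Lemma green_polarization p q s t :
  2 * green (w p - w q) (w s - w t)
  = resistance p t + resistance q s - resistance p s - resistance q t.
Proof.
rewrite /resistance !greenBl !greenBr (green_sym (w t) (w p)) (green_sym (w s) (w q)).
by rewrite (green_sym (w s) (w p)) (green_sym (w t) (w q)); ring.
Qed.

Lemma ntrees_mul_t_id2 s t p q : s \in A -> t \in A -> p \in A -> q \in A ->
  (ntrees A g)%:R * (t_id2 A g p q s t)%:R
  = (t_id A g s t)%:R * (t_id A g p q)%:R
    - (1 / 4 : R) * ((t_id A g p s)%:R - (t_id A g q s)%:R
                     - (t_id A g p t)%:R + (t_id A g q t)%:R) ^+ 2.
Proof.
move=> sA tA pA qA; rewrite ntrees_det t_id2_green // !t_id_resistance //.
have two_neq0 : (2 : R) != 0 by rewrite pnatr_eq0.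
have -> : green (w p - w q) (w s - w t)
    = (resistance p t + resistance q s - resistance p s - resistance q t) / 2.
  by rewrite -green_polarization mulrAC divff // mul1r.
by field.
Qed.

Lemma t_id_sym u v : u \in A -> v \in A -> (t_id A g u v)%:R = (t_id A g v u)%:R :> R.
Proof. by move=> uA vA; rewrite !t_id_resistance // resistance_sym. Qed.

End Resistance.

Unset Implicit Arguments.

Theorem theorem5p1 (V E : finType) (A : {set V}) (g : E -> V * V) :
  wf_graph A g -> connected_graph A g ->
  (forall s t p q : V, s \in A -> t \in A -> p \in A -> q \in A ->
    (ntrees A g)%:R * (t_id2 A g p q s t)%:R
    = (t_id A g s t)%:R * (t_id A g p q)%:R
      - (1 / 4 : rat) * ((t_id A g p s)%:R - (t_id A g q s)%:R
                         - (t_id A g p t)%:R + (t_id A g q t)%:R) ^+ 2)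
  /\
  (forall s p q : V, s \in A -> p \in A -> q \in A ->
    (ntrees A g)%:R * (t_id2 A g p q p s)%:R
    = (t_id A g p s)%:R * (t_id A g p q)%:R
      - (1 / 4 : rat) * ((t_id A g p s)%:R - (t_id A g q s)%:R
                         + (t_id A g p q)%:R) ^+ 2).
Proof.
move=> wf conn; split=> [s t p q sA tA pA qA | s p q sA pA qA].
  exact: (ntrees_mul_t_id2 rat wf conn sA).
rewrite (ntrees_mul_t_id2 rat wf conn sA pA sA pA qA) t_id_xx (t_id_sym rat wf conn sA qA pA).
by congr (_ - _ * _); ring.
Qed.
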